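(* Let $0<\alpha<1$ and $\gamma>0$, and for $j\in\mathbb{Z}_{\ge0}$ let $F_j={}_2F_1(\gamma,j\gamma;1+j\gamma;\alpha)$. Then (1) $F_0=1$; (2) $F_{j+1}>F_j$ for all $j\ge0$; (3) $F_j<(1-\alpha)^{-\gamma}$ for all $j\ge0$.
   Context: ${}_2F_1(a,b;c;z)=\sum_{k\ge0}\frac{(a)_k(b)_k}{k!(c)_k}z^k$ is the Gauss hypergeometric function, $(a)_k$ the Pochhammer symbol. *)

From Stdlib Require Import Reals Arith Factorial.
From Coquelicot Require Import Coquelicot.
Open Scope R_scope.

Fixpoint pochhammer (a : R) (k : nat) : R :=
  match k with
  | O => 1
  | S k' => pochhammer a k' * (a + INR k')
  end.

Definition hyp2F1_term (a b c z : R) (k : nat) : R :=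
  pochhammer a k * pochhammer b k / (INR (fact k) * pochhammer c k) * z ^ k.

(* Gauss hypergeometric function 2F1(a,b;c;z) as the sum of the series
   (Coquelicot's total Series; the series converges for |z| < 1 when c is
   not a nonpositive integer). *)
Definition hyp2F1 (a b c z : R) : R := Series (hyp2F1_term a b c z).

From Stdlib Require Import Reals Lra Lia Factorial.
From Coquelicot Require Import Coquelicot.
Open Scope R_scope.

(* Since (b)_k / (1 + b)_k = b / (b + k), the k-th term of F_j is the k-th term
   (gamma)_k alpha^k / k! of the binomial series of (1 - alpha)^(-gamma), weighted by
   j gamma / (j gamma + k) for k >= 1.  These weights vanish for j = 0, increase
   strictly with j and stay below 1, which gives (1), (2) and F_j < sum_k (gamma)_k alpha^k / k!.
   The last sum is at most (1 - alpha)^(-gamma): each partial sum S_n satisfies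
   ((1 - x)^gamma S_n(x))' = -(gamma + n) (gamma)_n / n! x^n (1 - x)^(gamma - 1) <= 0. *)

Lemma pochhammer_pos (a : R) (k : nat) : 0 < a -> 0 < pochhammer a k.
Proof.
  intros Ha; induction k as [|k IH]; cbn [pochhammer]; [lra|].
  apply Rmult_lt_0_compat; [exact IH|]. pose proof (pos_INR k); lra.
Qed.

Lemma pochhammer_0_succ (k : nat) : pochhammer 0 (S k) = 0.
Proof.
  induction k as [|k IH]; cbn [pochhammer] in *; [simpl; ring|].
  rewrite IH; ring.
Qed.

Lemma pochhammer_mul_shift (b : R) (k : nat) :
  pochhammer b k * (b + INR k) = b * pochhammer (1 + b) k.
Proof.
  induction k as [|k IH]; cbn [pochhammer]; [simpl; ring|].
  rewrite S_INR.
  transitivity (pochhammer b k * (b + INR k) * (b + (INR k + 1))); [ring|].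
  rewrite IH; ring.
Qed.

Lemma hyp2F1_b0 (a c z : R) : hyp2F1 a 0 c z = 1.
Proof.
  assert (partial_sums : forall n, sum_n (hyp2F1_term a 0 c z) n = 1).
  { induction n as [|n IH].
    - rewrite sum_O. unfold hyp2F1_term. simpl. field.
    - rewrite sum_Sn, IH. unfold hyp2F1_term. rewrite pochhammer_0_succ.
      unfold plus; simpl. unfold Rdiv. ring. }
  unfold hyp2F1, Series. rewrite (Lim_seq_ext _ _ partial_sums), Lim_seq_const.
  reflexivity.
Qed.

Definition binom_coef (g : R) (k : nat) : R := pochhammer g k / INR (fact k).

Lemma binom_coef_pos (g : R) (k : nat) : 0 < g -> 0 < binom_coef g k.
Proof.
  intros Hg. apply Rdiv_lt_0_compat; [apply pochhammer_pos, Hg | apply INR_fact_lt_0].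
Qed.

Lemma binom_coef_succ (g : R) (k : nat) :
  binom_coef g (S k) * INR (S k) = binom_coef g k * (g + INR k).
Proof.
  unfold binom_coef. cbn [pochhammer]. rewrite fact_simpl, mult_INR.
  pose proof (INR_fact_lt_0 k). pose proof (pos_INR k). rewrite S_INR.
  field. lra.
Qed.

Definition binom_partial (g : R) (n : nat) (x : R) : R :=
  sum_n (fun k => binom_coef g k * x ^ k) n.

Fixpoint binom_partial_deriv (g : R) (n : nat) (x : R) : R :=
  match n with
  | O => 0
  | S m => binom_partial_deriv g m x + binom_coef g m * (g + INR m) * x ^ m
  end.

Lemma is_derive_binom_partial (g : R) (n : nat) (x : R) :
  is_derive (binom_partial g n) x (binom_partial_deriv g n x).
Proof.
  unfold binom_partial. induction n as [|m IH]; cbn [binom_partial_deriv].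
  - apply (is_derive_ext (fun y => binom_coef g 0 * y ^ 0)).
    { intros y. rewrite sum_O. reflexivity. }
    auto_derive; [easy | ring].
  - apply (is_derive_ext
             (fun y => sum_n (fun k => binom_coef g k * y ^ k) m
                       + binom_coef g (S m) * y ^ S m)).
    { intros y. rewrite sum_Sn. reflexivity. }
    rewrite <- binom_coef_succ.
    replace (binom_partial_deriv g m x + binom_coef g (S m) * INR (S m) * x ^ m)
      with (plus (binom_partial_deriv g m x) (binom_coef g (S m) * (INR (S m) * 1 * x ^ m)))
      by (unfold plus; simpl; ring).
    apply (is_derive_plus _ (fun y => binom_coef g (S m) * y ^ S m)); [exact IH|].
    auto_derive; [easy | simpl; ring].
Qed.

Lemma binom_partial_ode (g : R) (n : nat) (x : R) :
  (1 - x) * binom_partial_deriv g n x - g * binom_partial g n x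
  = - ((g + INR n) * binom_coef g n * x ^ n).
Proof.
  unfold binom_partial. induction n as [|m IH].
  - rewrite sum_O. simpl. ring.
  - cbn [binom_partial_deriv]. rewrite sum_Sn.
    change plus with Rplus. cbn [pow].
    transitivity ((1 - x) * binom_partial_deriv g m x
                  - g * sum_n (fun k => binom_coef g k * x ^ k) m
                  + (1 - x) * (binom_coef g m * (g + INR m)) * x ^ m
                  - g * (binom_coef g (S m) * (x * x ^ m))); [ring|].
    rewrite IH, (Rmult_comm (g + INR m)), <- binom_coef_succ, S_INR. ring.
Qed.

Lemma binom_partial_at_0 (g : R) (n : nat) : binom_partial g n 0 = 1.
Proof.
  unfold binom_partial. induction n as [|m IH].
  - rewrite sum_O. unfold binom_coef. simpl. field.
  - rewrite sum_Sn, IH. unfold plus; simpl. ring.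
Qed.

Lemma is_derive_damped_binom_partial (g : R) (n : nat) (y : R) : y < 1 ->
  is_derive (fun t => Rpower (1 - t) g * binom_partial g n t) y
    (Rpower (1 - y) g / (1 - y) * - ((g + INR n) * binom_coef g n * y ^ n)).
Proof.
  intros Hy.
  assert (Hpow : is_derive (fun t => Rpower (1 - t) g) y
                   (Rpower (1 - y) g * (- g / (1 - y)))).
  { unfold Rpower. auto_derive; [lra|]. replace (1 + - y) with (1 - y) by ring. field. lra. }
  rewrite <- binom_partial_ode.
  replace (Rpower (1 - y) g / (1 - y) * ((1 - y) * binom_partial_deriv g n y
                                        - g * binom_partial g n y))
    with (plus (mult (Rpower (1 - y) g * (- g / (1 - y))) (binom_partial g n y))
               (mult (Rpower (1 - y) g) (binom_partial_deriv g n y)))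
    by (unfold plus, mult; simpl; field; lra).
  exact (is_derive_mult _ _ y _ _ Hpow (is_derive_binom_partial g n y) Rmult_comm).
Qed.

Lemma binom_partial_le_Rpower (g : R) (n : nat) (x : R) : 0 < g -> 0 <= x < 1 ->
  binom_partial g n x <= Rpower (1 - x) (- g).
Proof.
  intros Hg Hx.
  set (G := fun t => Rpower (1 - t) g * binom_partial g n t).
  assert (HG0 : G 0 = 1).
  { unfold G. rewrite binom_partial_at_0, Rminus_0_r.
    unfold Rpower. rewrite ln_1, Rmult_0_r, exp_0. ring. }
  assert (HGx : G x <= G 0).
  { destruct (MVT_gen G 0 x
      (fun t => Rpower (1 - t) g / (1 - t) * - ((g + INR n) * binom_coef g n * t ^ n)))
      as [c [Hc HGxc]].
    - intros t Ht. rewrite Rmax_right in Ht by lra.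
      apply is_derive_damped_binom_partial. lra.
    - intros t Ht. rewrite Rmax_right in Ht by lra.
      apply continuity_pt_filterlim, (ex_derive_continuous (V := R_NormedModule)).
      eexists. apply is_derive_damped_binom_partial. lra.
    - rewrite Rmin_left, Rmax_right in Hc by lra.
      assert (Hdamp : 0 < Rpower (1 - c) g / (1 - c)).
      { apply Rdiv_lt_0_compat; [apply exp_pos | lra]. }
      assert (Hlast : 0 <= (g + INR n) * binom_coef g n * c ^ n).
      { pose proof (pos_INR n). pose proof (binom_coef_pos g n Hg).
        apply Rmult_le_pos; [apply Rmult_le_pos |]; [lra | lra | apply pow_le; lra]. }
      assert (0 <= Rpower (1 - c) g / (1 - c) * ((g + INR n) * binom_coef g n * c ^ n) * x)
        by (apply Rmult_le_pos; [apply Rmult_le_pos |]; lra).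
      assert (G x - G 0
              = - (Rpower (1 - c) g / (1 - c) * ((g + INR n) * binom_coef g n * c ^ n) * x))
        by (rewrite HGxc; ring).
      lra. }
  rewrite Rpower_Ropp.
  assert (Hpow : 0 < Rpower (1 - x) g) by apply exp_pos.
  apply (Rmult_le_reg_l (Rpower (1 - x) g)); [exact Hpow|].
  rewrite Rinv_r by lra. rewrite HG0 in HGx. exact HGx.
Qed.

Lemma ex_series_binom (g x : R) : 0 < g -> 0 <= x < 1 ->
  ex_series (fun k => binom_coef g k * x ^ k).
Proof.
  intros Hg Hx.
  apply (ex_finite_lim_seq_incr _ (Rpower (1 - x) (- g))).
  - intros n. rewrite sum_Sn. change plus with Rplus.
    pose proof (binom_coef_pos g (S n) Hg). pose proof (pow_le x (S n) (proj1 Hx)).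
    nra.
  - intros n. apply binom_partial_le_Rpower; assumption.
Qed.

Lemma Series_binom_le (g x : R) : 0 < g -> 0 <= x < 1 ->
  Series (fun k => binom_coef g k * x ^ k) <= Rpower (1 - x) (- g).
Proof.
  intros Hg Hx.
  exact (is_lim_seq_le _ _ (Series _) (Rpower (1 - x) (- g))
            (fun n => binom_partial_le_Rpower g n x Hg Hx)
            (Series_correct _ (ex_series_binom g x Hg Hx)) (is_lim_seq_const _)).
Qed.

(* [(b)_k / (1 + b)_k]; the case [k = 0] is separate because [b / (b + 0)] is [0] at [b = 0]. *)
Definition pochhammer_ratio (b : R) (k : nat) : R :=
  match k with
  | O => 1
  | S _ => b / (b + INR k)
  end.

Lemma pochhammer_ratioE (b : R) (k : nat) : 0 <= b ->
  pochhammer b k = pochhammer_ratio b k * pochhammer (1 + b) k.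
Proof.
  intros Hb. destruct k as [|m]; [simpl; ring|].
  pose proof (pochhammer_mul_shift b (S m)) as Hshift.
  assert (0 < INR (S m)) by (apply lt_0_INR; lia).
  unfold pochhammer_ratio.
  replace (b / (b + INR (S m)) * pochhammer (1 + b) (S m))
    with (b * pochhammer (1 + b) (S m) / (b + INR (S m))) by (field; lra).
  rewrite <- Hshift. field. lra.
Qed.

Lemma hyp2F1_term_shift (a b z : R) (k : nat) : 0 <= b ->
  hyp2F1_term a b (1 + b) z k = binom_coef a k * z ^ k * pochhammer_ratio b k.
Proof.
  intros Hb. unfold hyp2F1_term, binom_coef. rewrite (pochhammer_ratioE b k Hb).
  assert (0 < pochhammer (1 + b) k) by (apply pochhammer_pos; lra).
  pose proof (INR_fact_lt_0 k).
  field. lra.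
Qed.

Lemma hyp2F1_shift_Series (a b z : R) : 0 <= b ->
  hyp2F1 a b (1 + b) z = Series (fun k => binom_coef a k * z ^ k * pochhammer_ratio b k).
Proof.
  intros Hb. apply Series_ext. intros k. apply hyp2F1_term_shift, Hb.
Qed.

Lemma pochhammer_ratio_bounds (b : R) (k : nat) : 0 <= b ->
  0 <= pochhammer_ratio b k <= 1.
Proof.
  intros Hb. destruct k as [|m]; unfold pochhammer_ratio; [lra|].
  assert (0 < INR (S m)) by (apply lt_0_INR; lia).
  split.
  - apply Rdiv_le_0_compat; lra.
  - apply Rmult_le_reg_r with (b + INR (S m)); [lra|].
    unfold Rdiv. rewrite Rmult_assoc, Rinv_l; lra.
Qed.

Lemma pochhammer_ratio_lt (b b' : R) (k : nat) : 0 <= b < b' ->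
  pochhammer_ratio b (S k) < pochhammer_ratio b' (S k).
Proof.
  intros Hb. unfold pochhammer_ratio.
  assert (0 < INR (S k)) by (apply lt_0_INR; lia).
  assert (Hdiff : b' / (b' + INR (S k)) - b / (b + INR (S k))
                  = INR (S k) * (b' - b) / ((b + INR (S k)) * (b' + INR (S k))))
    by (field; lra).
  assert (0 < INR (S k) * (b' - b) / ((b + INR (S k)) * (b' + INR (S k))))
    by (apply Rdiv_lt_0_compat; apply Rmult_lt_0_compat; lra).
  lra.
Qed.

Lemma pochhammer_ratio_le (b b' : R) (k : nat) : 0 <= b <= b' ->
  pochhammer_ratio b k <= pochhammer_ratio b' k.
Proof.
  intros Hb. destruct k as [|m]; [simpl; lra|].
  destruct (Rle_lt_or_eq_dec b b' (proj2 Hb)) as [Hlt | ->]; [|lra].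
  left. apply pochhammer_ratio_lt. lra.
Qed.

Lemma pochhammer_ratio_1_lt (b : R) : 0 <= b -> pochhammer_ratio b 1 < 1.
Proof.
  intros Hb. unfold pochhammer_ratio. simpl INR.
  apply Rmult_lt_reg_r with (b + 1); [lra|].
  unfold Rdiv. rewrite Rmult_assoc, Rinv_l; lra.
Qed.

Lemma Series_pos (w : nat -> R) (n : nat) :
  ex_series w -> (forall k, 0 <= w k) -> 0 < w n -> 0 < Series w.
Proof.
  intros Hw Hnonneg Hn.
  assert (Hpartial : w n <= sum_f_R0 w n).
  { destruct n as [|m]; simpl; [lra|].
    pose proof (cond_pos_sum w m Hnonneg). lra. }
  assert (sum_f_R0 w n <= Series w)
    by exact (sum_incr w n (Series w) (proj1 (is_series_Reals _ _) (Series_correct _ Hw)) Hnonneg).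
  lra.
Qed.

Lemma Series_lt (u v : nat -> R) (n : nat) : ex_series u -> ex_series v ->
  (forall k, u k <= v k) -> u n < v n -> Series u < Series v.
Proof.
  intros Hu Hv Hle Hn.
  assert (Hdiff : ex_series (fun k => v k - u k))
    by exact (ex_series_minus (V := R_NormedModule) v u Hv Hu).
  assert (0 < Series (fun k => v k - u k)).
  { apply (Series_pos _ n Hdiff); intros; [specialize (Hle k) |]; lra. }
  rewrite Series_minus in * by assumption. lra.
Qed.

Lemma ex_series_weighted (c u : nat -> R) : ex_series c -> (forall k, 0 <= c k) ->
  (forall k, 0 <= u k <= 1) -> ex_series (fun k => c k * u k).
Proof.
  intros Hc Hpos Hu.
  apply (ex_series_le (V := R_CompleteNormedModule) _ c); [|exact Hc].
  intros k. change norm with Rabs. specialize (Hpos k). specialize (Hu k).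
  rewrite Rabs_pos_eq by nra. nra.
Qed.

Lemma Series_weighted_lt (c u v : nat -> R) (n : nat) :
  ex_series c -> (forall k, 0 <= c k) ->
  (forall k, 0 <= u k <= v k) -> (forall k, v k <= 1) -> 0 < c n -> u n < v n ->
  Series (fun k => c k * u k) < Series (fun k => c k * v k).
Proof.
  intros Hc Hpos Huv Hv1 Hcn Hn.
  apply (Series_lt _ _ n).
  - apply ex_series_weighted; [exact Hc | exact Hpos |].
    intros k. specialize (Huv k). specialize (Hv1 k). lra.
  - apply ex_series_weighted; [exact Hc | exact Hpos |].
    intros k. specialize (Huv k). specialize (Hv1 k). lra.
  - intros k. apply Rmult_le_compat_l; [apply Hpos | apply Huv].
  - apply Rmult_lt_compat_l; assumption.
Qed.

Theorem mainTheorem5 (alpha gamma : R) :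
  0 < alpha < 1 -> 0 < gamma ->
  let F := fun j : nat =>
    hyp2F1 gamma (INR j * gamma) (1 + INR j * gamma) alpha in
  F 0%nat = 1 /\
  (forall j : nat, F (S j) > F j) /\
  (forall j : nat, F j < Rpower (1 - alpha) (- gamma)).
Proof.
  intros Halpha Hgamma F.
  set (c := fun k => binom_coef gamma k * alpha ^ k).
  assert (Hb : forall j, 0 <= INR j * gamma)
    by (intros j; apply Rmult_le_pos; [apply pos_INR | lra]).
  assert (HF : forall j, F j = Series (fun k => c k * pochhammer_ratio (INR j * gamma) k))
    by (intros j; apply hyp2F1_shift_Series, Hb).
  assert (Hc : ex_series c) by (apply ex_series_binom; lra).
  assert (Hcpos : forall k, 0 < c k)
    by (intros k; apply Rmult_lt_0_compat; [apply binom_coef_pos, Hgamma | apply pow_lt; lra]).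
  assert (Hcnonneg : forall k, 0 <= c k) by (intros k; left; apply Hcpos).
  split; [|split].
  - unfold F. change (INR 0) with 0. rewrite Rmult_0_l. apply hyp2F1_b0.
  - intros j. rewrite !HF.
    apply (Series_weighted_lt _ _ _ 1 Hc Hcnonneg); [| | apply Hcpos |].
    + intros k. split; [apply pochhammer_ratio_bounds, Hb |].
      apply pochhammer_ratio_le. rewrite S_INR. split; [apply Hb | lra].
    + intros k. apply pochhammer_ratio_bounds, Hb.
    + apply pochhammer_ratio_lt. rewrite S_INR. split; [apply Hb | lra].
  - intros j. rewrite HF.
    apply (Rlt_le_trans _ (Series (fun k => c k * 1))).
    + apply (Series_weighted_lt _ _ _ 1 Hc Hcnonneg); [| | apply Hcpos |].
      * intros k. apply pochhammer_ratio_bounds, Hb.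
      * intros k. apply Rle_refl.
      * apply pochhammer_ratio_1_lt, Hb.
    + rewrite Series_scal_r, Rmult_1_r. apply Series_binom_le; lra.
Qed.
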